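(* Let $\hat{\mathsf{S}}^{-1}=-\gamma_1 \mathsf{W}^{-1}$. Then \begin{equation*} \mathcal{A}_{\gamma_1,\gamma_2} \widetilde{\mathcal{P}}_{\gamma_1,\gamma_2}^{-1} = \begin{bmatrix} \mathsf{I}_n & 0 & 0 \\ \mathsf{A_{21} A_{11}^{-1}} & \mathsf{I}_m-\mathsf{DE} & -\mathsf{DG} \\ \mathsf{C A_{11}^{-1}} & -\mathsf{FE} & \mathsf{I}_\ell-\mathsf{FG} \end{bmatrix}. \end{equation*} The matrix $\mathcal{A}_{\gamma_1,\gamma_2} \widetilde{\mathcal{P}}_{\gamma_1,\gamma_2}^{-1}$ has $1$ as an eigenvalue of algebraic multiplicity at least $n+m$. The remaining eigenvalues are the non-unit eigenvalues of the matrix \begin{equation*} \begin{bmatrix} \mathsf{I}_m - \mathsf{DE} & -\mathsf{DG} \\ -\mathsf{FE} & \mathsf{I}_\ell-\mathsf{FG} \end{bmatrix}. \end{equation*}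
   Context: Let $\mathsf{A}\in\mathbb{R}^{n\times n}$ be symmetric positive definite, $\mathsf{A_2}\in\mathbb{R}^{m\times m}$ symmetric positive semidefinite with $\ker(\mathsf{A_2})=\operatorname{span}\{\mathsf{1}\}$, $\mathsf{C}\in\mathbb{R}^{\ell\times n}$ of full row rank, $\mathsf{C_2}\in\mathbb{R}^{\ell\times m}$ with $\mathsf{1}\notin\ker(\mathsf{C_2})$, $\mathsf{W}\in\mathbb{R}^{\ell\times\ell}$ symmetric positive definite, and $\gamma_1,\gamma_2>0$. Define $\mathsf{A_{11}}=\mathsf{A}+\gamma_1\mathsf{C^TW^{-1}C}$, $\mathsf{A_{12}}=-\gamma_1\mathsf{C^TW^{-1}C_2}$, $\mathsf{A_{21}}=-\gamma_2\mathsf{C_2^TW^{-1}C}$, $\mathsf{A_{22}}=\mathsf{A_2}+\gamma_2\mathsf{C_2^TW^{-1}C_2}$ (both invertible), the augmented matrix $\mathcal{A}_{\gamma_1,\gamma_2}=\begin{bmatrix}\mathsf{A_{11}}&\mathsf{A_{12}}&\mathsf{C^T}\\ \mathsf{A_{21}}&\mathsf{A_{22}}&-\mathsf{C_2^T}\\ \mathsf{C}&-\mathsf{C_2}&0\end{bmatrix}$ and the modified augmented Lagrangian preconditioner $\widetilde{\mathcal{P}}_{\gamma_1,\gamma_2}=\begin{bmatrix}\mathsf{A_{11}}&\mathsf{A_{12}}&\mathsf{C^T}\\ 0&\mathsf{A_{22}}&-\mathsf{C_2^T}\\ 0&0&\hat{\mathsf{S}}\end{bmatrix}$. Further let $\mathsf{D}=\gamma_2\mathsf{C_2^TW^{-1}}\bigl(\mathsf{I}_\ell-(\mathsf{I}_\ell+\gamma_1\mathsf{CA^{-1}C^TW^{-1}})^{-1}\bigr)$,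 $\mathsf{E}=\mathsf{C_2A_{22}^{-1}}$, $\mathsf{G}=\mathsf{I}_\ell-\gamma_1\mathsf{C_2A_{22}^{-1}C_2^TW^{-1}}$, $\mathsf{F}=(\mathsf{I}_\ell+\gamma_1\mathsf{CA^{-1}C^TW^{-1}})^{-1}$. *)

From mathcomp Require Import all_boot all_order all_algebra.
Set Implicit Arguments. Unset Strict Implicit. Unset Printing Implicit Defensive.
Import Order.TTheory GRing.Theory Num.Theory.
Local Open Scope ring_scope.

Definition spd (R : realFieldType) (k : nat) (M : 'M[R]_k) : Prop :=
  M^T = M /\ forall x : 'cV[R]_k, x != 0 -> 0 < (x^T *m M *m x) 0 0.

Definition spsd (R : realFieldType) (k : nat) (M : 'M[R]_k) : Prop :=
  M^T = M /\ forall x : 'cV[R]_k, 0 <= (x^T *m M *m x) 0 0.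

Definition ones (R : realFieldType) (k : nat) : 'cV[R]_k := const_mx 1.

Definition block3 (R : realFieldType) (n m l : nat)
  (X11 : 'M[R]_(n, n)) (X12 : 'M[R]_(n, m)) (X13 : 'M[R]_(n, l))
  (X21 : 'M[R]_(m, n)) (X22 : 'M[R]_(m, m)) (X23 : 'M[R]_(m, l))
  (X31 : 'M[R]_(l, n)) (X32 : 'M[R]_(l, m)) (X33 : 'M[R]_(l, l))
  : 'M[R]_(n + (m + l)) :=
  block_mx X11 (row_mx X12 X13) (col_mx X21 X31) (block_mx X22 X23 X32 X33).

From mathcomp Require Import all_boot all_order all_algebra.
From mathcomp Require Import lra.
Set Implicit Arguments. Unset Strict Implicit. Unset Printing Implicit Defensive.
Import Order.TTheory GRing.Theory Num.Theory.
Local Open Scope ring_scope.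

(* Ptil is block upper triangular with diagonal blocks A11 and
   P22 = [A22, -C2^T; 0, Shat], so Acal Ptil^-1 is block lower triangular with
   an identity corner and the block (Schur complement of A11 in Acal) P22^-1.
   With Shat = -W/g1 and the Woodbury identity F = I - g1 C A11^-1 C^T W^-1
   this block is T.  Since T = I - [D; F] [E, G] with a middle dimension l,
   Sylvester's identity t^l det(tI + UV) = t^(m+l) det(tI + VU) puts the
   factor (X - 1)^m into char T.  Positivity makes A, W, A11 and A22
   invertible; for A22 this uses that C2 does not kill the kernel of A2. *)

Lemma unitmx_ker0 (R : fieldType) k (M : 'M[R]_k) :
  (forall x : 'cV[R]_k, M *m x = 0 -> x = 0) -> M \in unitmx.
Proof.
move=> ker0; rewrite unitmxE unitfE -det_tr; apply/det0P => -[v nz_v vM].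
have /ker0/eqP : M *m v^T = 0 by rewrite -[M]trmxK -trmx_mul vM trmx0.
by rewrite trmx_eq0 (negPf nz_v).
Qed.

Section QuadraticForms.

Variable R : realFieldType.

Lemma qformD_scale k (x : 'cV[R]_k) (P Q : 'M[R]_k) (c : R) :
  (x^T *m (P + c *: Q) *m x) 0 0 = (x^T *m P *m x) 0 0 + c * (x^T *m Q *m x) 0 0.
Proof. by rewrite mulmxDr mulmxDl -scalemxAr -scalemxAl !mxE. Qed.

Lemma qform_congr k p (x : 'cV[R]_k) (C : 'M[R]_(p, k)) (Q : 'M[R]_p) :
  x^T *m (C^T *m Q *m C) *m x = (C *m x)^T *m Q *m (C *m x).
Proof. by rewrite trmx_mul !mulmxA. Qed.

Lemma spd_qform_ge0 k (Q : 'M[R]_k) (x : 'cV[R]_k) : spd Q -> 0 <= (x^T *m Q *m x) 0 0.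
Proof.
move=> [_ Qpos]; have [->|/Qpos/ltW//] := eqVneq x 0.
by rewrite trmx0 !mul0mx mxE.
Qed.

Lemma spd_qform_eq0 k (Q : 'M[R]_k) (x : 'cV[R]_k) :
  spd Q -> (x^T *m Q *m x) 0 0 = 0 -> x = 0.
Proof. by move=> [_ Qpos] qx0; apply/eqP; apply: contraT => /Qpos; rewrite qx0 ltxx. Qed.

Lemma spd_unitmx k (M : 'M[R]_k) : spd M -> M \in unitmx.
Proof.
move=> sM; apply: unitmx_ker0 => x Mx0; apply: spd_qform_eq0 sM _.
by rewrite -mulmxA Mx0 mulmx0 mxE.
Qed.

Lemma spd_invmx k (W : 'M[R]_k) : spd W -> spd (invmx W).
Proof.
move=> sW; have uW := spd_unitmx sW; have [WT Wpos] := sW.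
have WiT : (invmx W)^T = invmx W by rewrite trmx_inv WT.
split=> // x nz_x; have := Wpos (invmx W *m x).
rewrite trmx_mul WiT -!mulmxA (mulmxA W) mulmxV // mul1mx !mulmxA; apply.
by apply: contra nz_x => /eqP Wix0; rewrite -(mulKVmx uW x) Wix0 mulmx0.
Qed.

Lemma spdD_congr k p (A : 'M[R]_k) (Q : 'M[R]_p) (C : 'M[R]_(p, k)) (g : R) :
  spd A -> spd Q -> 0 <= g -> spd (A + g *: (C^T *m Q *m C)).
Proof.
move=> [AT Apos] sQ g_ge0; split.
  by rewrite linearD linearZ /= !trmx_mul trmxK sQ.1 AT mulmxA.
move=> x nz_x; rewrite qformD_scale qform_congr ltr_wpDr ?Apos //.
by rewrite mulr_ge0 ?spd_qform_ge0.
Qed.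

Lemma unitmx_psdD_congr k p (A : 'M[R]_k) (Q : 'M[R]_p) (C : 'M[R]_(p, k)) (g : R) :
  spsd A -> spd Q -> 0 < g -> (forall x : 'cV_k, A *m x = 0 -> C *m x = 0 -> x = 0) ->
  A + g *: (C^T *m Q *m C) \in unitmx.
Proof.
move=> [_ A_ge0] sQ g_gt0 kers0; apply: unitmx_ker0 => x Bx0.
have : (x^T *m (A + g *: (C^T *m Q *m C)) *m x) 0 0 = 0.
  by rewrite -mulmxA Bx0 mulmx0 mxE.
rewrite qformD_scale qform_congr => q0.
have Cx0 : C *m x = 0.
  apply: (spd_qform_eq0 sQ).
  by have := A_ge0 x; have := spd_qform_ge0 (C *m x) sQ; nra.
apply: (kers0 _ _ Cx0); move: Bx0.
by rewrite mulmxDl -scalemxAl -!mulmxA Cx0 !mulmx0 scaler0 addr0.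
Qed.

End QuadraticForms.

Lemma ker_line_meet0 (R : fieldType) k p (A : 'M[R]_k) (C : 'M[R]_(p, k)) (v : 'cV[R]_k) :
  (forall x : 'cV[R]_k, A *m x = 0 <-> exists c : R, x = c *: v) -> C *m v != 0 ->
  forall x : 'cV[R]_k, A *m x = 0 -> C *m x = 0 -> x = 0.
Proof.
move=> kerA nz_Cv x /kerA[c ->]; rewrite -scalemxAr => /eqP.
by rewrite scaler_eq0 (negPf nz_Cv) orbF => /eqP ->; rewrite scale0r.
Qed.

Lemma sylvester_det (R : comNzRingType) k j
    (U : 'M[R]_(k, j)) (V : 'M[R]_(j, k)) (t : R) :
  t ^+ j * \det (t%:M + U *m V) = t ^+ k * \det (t%:M + V *m U).
Proof.
set X := block_mx (t%:M : 'M_k) (- U) V (1%:M : 'M_j).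
have XE : X = block_mx 1%:M (- U) 0 1%:M *m block_mx (t%:M + U *m V) 0 V 1%:M.
  by rewrite mulmx_block !mul1mx !mul0mx !mulmx1 !add0r mulNmx addrK.
have XE' : block_mx 1%:M 0 (- V) t%:M *m X = block_mx t%:M (- U) 0 (t%:M + V *m U).
  rewrite mulmx_block !mul1mx !mul0mx !mulmx1 !addr0 mulNmx mul_mx_scalar.
  by rewrite mul_scalar_mx addNr mulNmx mulmxN opprK addrC.
have := congr1 determinant XE'.
rewrite det_mulmx det_lblock det1 mul1r det_scalar XE det_mulmx det_ublock !det1 mul1r.
by rewrite det_lblock det1 mulr1 mul1r det_ublock det_scalar => ->.
Qed.

Lemma char_poly_mx_1_sub (R : comNzRingType) k (M : 'M[R]_k) :
  char_poly_mx (1%:M - M) = ('X - 1%:P)%:M + map_mx polyC M.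
Proof.
by rewrite /char_poly_mx map_mxB map_mx1 opprB addrA polyC1 raddfB addrAC.
Qed.

Lemma char_poly_1_sub_mulmxC (R : comNzRingType) k j
    (U : 'M[R]_(k, j)) (V : 'M[R]_(j, k)) :
  ('X - 1%:P) ^+ j * char_poly (1%:M - U *m V) =
  ('X - 1%:P) ^+ k * char_poly (1%:M - V *m U).
Proof. by rewrite /char_poly !char_poly_mx_1_sub !map_mxM sylvester_det. Qed.

Lemma char_poly_block_lower (R : comNzRingType) p q
    (A : 'M[R]_p) (B : 'M[R]_(q, p)) (D : 'M[R]_q) :
  char_poly (block_mx A 0 B D) = char_poly A * char_poly D.
Proof.
rewrite /char_poly /char_poly_mx map_block_mx map_mx0 scalar_mx_block.
by rewrite opp_block_mx add_block_mx oppr0 addr0 det_lblock.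
Qed.

Lemma char_poly1 (R : comNzRingType) k : char_poly (1%:M : 'M[R]_k) = ('X - 1%:P) ^+ k.
Proof. by rewrite /char_poly /char_poly_mx map_mx1 -raddfB det_scalar. Qed.

Lemma mulmx_block_invmx_utri (R : comUnitRingType) p q
    (P11 : 'M[R]_p) (P12 : 'M[R]_(p, q)) (P22 : 'M[R]_q)
    (A21 : 'M[R]_(q, p)) (A22 : 'M[R]_q) :
  P11 \in unitmx -> P22 \in unitmx ->
  block_mx P11 P12 A21 A22 *m invmx (block_mx P11 P12 0 P22) =
  block_mx 1%:M 0 (A21 *m invmx P11) ((A22 - A21 *m invmx P11 *m P12) *m invmx P22).
Proof.
move=> uP11 uP22; have uP : block_mx P11 P12 0 P22 \in unitmx.
  by rewrite unitmxE det_ublock unitrM -!unitmxE uP11 uP22.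
apply: (canLR (mulmxK uP)).
by rewrite mulmx_block !mul1mx !mul0mx !mulmx0 !addr0 !mulmxKV // subrKC.
Qed.

Lemma woodbury_invmx (R : comUnitRingType) k j
    (A : 'M[R]_k) (U : 'M[R]_(k, j)) (V : 'M[R]_(j, k)) :
  A \in unitmx -> A + U *m V \in unitmx ->
  invmx (1%:M + V *m invmx A *m U) = 1%:M - V *m invmx (A + U *m V) *m U.
Proof.
move=> uA uB; set B := A + U *m V.
have AUVB : invmx A *m (U *m V) *m invmx B = invmx A - invmx B.
  rewrite -[U *m V](addKr A) -/B mulmxDr mulmxDl mulmxN mulVmx // mulNmx mul1mx.
  by rewrite -mulmxA mulmxV // mulmx1 addrC.
have PQ : (1%:M + V *m invmx A *m U) *m (1%:M - V *m invmx B *m U) = 1%:M.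
  rewrite mulmxDl mul1mx mulmxBr mulmx1.
  have -> : V *m invmx A *m U *m (V *m invmx B *m U) =
            V *m (invmx A *m (U *m V) *m invmx B) *m U by rewrite !mulmxA.
  by rewrite AUVB mulmxBr mulmxBl opprB subrKC subrK.
have [uP _] := mulmx1_unit PQ.
by rewrite -[RHS](mulKmx uP) PQ mulmx1.
Qed.

Section Factorization.

Variables (R : fieldType) (n m l : nat).
Variables (A : 'M[R]_n) (A2 : 'M[R]_m) (C : 'M[R]_(l, n)) (C2 : 'M[R]_(l, m)).
Variables (W : 'M[R]_l) (g1 g2 : R).

Local Notation Wi := (invmx W).
Local Notation A11 := (A + g1 *: (C^T *m Wi *m C)).
Local Notation A12 := (- (g1 *: (C^T *m Wi *m C2))).
Local Notation A21 := (- (g2 *: (C2^T *m Wi *m C))).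
Local Notation A22 := (A2 + g2 *: (C2^T *m Wi *m C2)).
Local Notation Shat := (invmx (- (g1 *: Wi))).
Local Notation F := (invmx (1%:M + g1 *: (C *m invmx A *m C^T *m Wi))).
Local Notation D := (g2 *: (C2^T *m Wi *m (1%:M - F))).
Local Notation E := (C2 *m invmx A22).
Local Notation G := (1%:M - g1 *: (C2 *m invmx A22 *m C2^T *m Wi)).
Local Notation T := (block_mx (1%:M - D *m E) (- (D *m G)) (- (F *m E)) (1%:M - F *m G)).
Local Notation Y := (g1 *: (C *m invmx A11 *m C^T *m Wi)).

Hypotheses (uA : A \in unitmx) (uW : W \in unitmx) (g1_neq0 : g1 != 0).
Hypotheses (uA11 : A11 \in unitmx) (uA22 : A22 \in unitmx).

Lemma Shat_scaled : Shat = - g1^-1 *: W.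
Proof.
rewrite -scaleNr invmxZ ?invmxK ?invrN // unitmxZ ?unitrN ?unitfE //.
by rewrite unitmx_inv.
Qed.

Lemma F_woodbury : F = 1%:M - Y.
Proof.
have := woodbury_invmx (U := C^T *m Wi) (V := g1 *: C) uA.
by rewrite -scalemxAr => /(_ uA11); rewrite !mulmxA -!scalemxAl.
Qed.

Lemma D_woodbury : D = g2 *: (C2^T *m Wi *m Y).
Proof. by rewrite F_woodbury subKr. Qed.

Lemma Wi_Shat : Wi *m Shat = - g1^-1 *: 1%:M.
Proof. by rewrite Shat_scaled -scalemxAr mulVmx. Qed.

Lemma Y_Shat : Y *m Shat = - (C *m invmx A11 *m C^T).
Proof.
by rewrite -scalemxAl -mulmxA Wi_Shat -scalemxAr mulmx1 scalerA mulrN mulfV // scaleN1r.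
Qed.

Lemma G_Shat : G *m Shat = Shat + E *m C2^T.
Proof.
rewrite mulmxBl mul1mx -scalemxAl -(mulmxA _ Wi) Wi_Shat -scalemxAr mulmx1.
by rewrite scalerA mulrN mulfV // scaleN1r opprK.
Qed.

Lemma D_Shat : D *m Shat = A21 *m invmx A11 *m C^T.
Proof.
rewrite D_woodbury -scalemxAl -mulmxA Y_Shat !mulNmx mulmxN scalerN.
by rewrite -!scalemxAl !mulmxA.
Qed.

Lemma D_C2 : D *m C2 = A21 *m invmx A11 *m A12.
Proof.
rewrite D_woodbury !mulNmx mulmxN opprK -!scalemxAl -!scalemxAr !mulmxA.
by rewrite -scalemxAl.
Qed.

Lemma C_A11_A12 : C *m invmx A11 *m A12 = - (Y *m C2).
Proof. by rewrite mulmxN -!scalemxAl -!scalemxAr !mulmxA. Qed.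

Lemma T_schur :
  T *m block_mx A22 (- C2^T) 0 Shat =
  block_mx A22 (- C2^T) (- C2) 0 - col_mx A21 C *m invmx A11 *m row_mx A12 C^T.
Proof.
have EA22 : E *m A22 = C2 by rewrite mulmxKV.
rewrite mulmx_block !mulmx0 !addr0 mul_col_mx mul_col_row opp_block_mx add_block_mx.
congr block_mx.
- by rewrite mulmxBl mul1mx -(mulmxA D) EA22 D_C2.
- rewrite mulmxN mulNmx -(mulmxA D) G_Shat (mulmxDr D) D_Shat.
  by rewrite mulmxBl mul1mx (mulmxA D E) opprB [LHS]addrC opprD addrA addrNK addrC.
- rewrite mulNmx -(mulmxA F) EA22 F_woodbury mulmxBl mul1mx C_A11_A12.
  by rewrite opprB opprK addrC.
- rewrite mulmxN mulNmx opprK mulmxBl mul1mx -(mulmxA F G) G_Shat (mulmxDr F).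
  rewrite (mulmxA F E) [F *m Shat + _]addrC opprD addrCA addNKr sub0r.
  by rewrite -{1}[Shat]mul1mx -mulmxBl F_woodbury subKr Y_Shat.
Qed.

Lemma augmented_mul_invmx_precond :
  block_mx A11 (row_mx A12 C^T) (col_mx A21 C) (block_mx A22 (- C2^T) (- C2) 0) *m
    invmx (block_mx A11 (row_mx A12 C^T) 0 (block_mx A22 (- C2^T) 0 Shat)) =
  block_mx 1%:M 0 (col_mx (A21 *m invmx A11) (C *m invmx A11)) T.
Proof.
have uShat : Shat \in unitmx by rewrite Shat_scaled unitmxZ ?unitrN ?unitrV ?unitfE.
have uP22 : block_mx A22 (- C2^T) 0 Shat \in unitmx.
  by rewrite unitmxE det_ublock unitrM -!unitmxE uA22 uShat.
by rewrite mulmx_block_invmx_utri // -T_schur mulmxK // mul_col_mx.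
Qed.

End Factorization.

Theorem mainTheorem8 (R : realFieldType) (n m l : nat)
  (A : 'M[R]_n) (A2 : 'M[R]_m) (C : 'M[R]_(l, n)) (C2 : 'M[R]_(l, m))
  (W : 'M[R]_l) (g1 g2 : R) :
  spd A -> spsd A2 ->
  (forall x : 'cV[R]_m, A2 *m x = 0 <-> exists c : R, x = c *: ones R m) ->
  \rank C = l ->
  C2 *m ones R m != 0 ->
  spd W -> 0 < g1 -> 0 < g2 ->
  let A11 := A + g1 *: (C^T *m invmx W *m C) in
  let A12 := - (g1 *: (C^T *m invmx W *m C2)) in
  let A21 := - (g2 *: (C2^T *m invmx W *m C)) in
  let A22 := A2 + g2 *: (C2^T *m invmx W *m C2) in
  let Shat := invmx (- (g1 *: invmx W)) in
  let Acal := block3 A11 A12 C^T A21 A22 (- C2^T) C (- C2) 0 in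
  let Ptil := block3 A11 A12 C^T 0 A22 (- C2^T) 0 0 Shat in
  let F := invmx (1%:M + g1 *: (C *m invmx A *m C^T *m invmx W)) in
  let D := g2 *: (C2^T *m invmx W *m (1%:M - F)) in
  let E := C2 *m invmx A22 in
  let G := 1%:M - g1 *: (C2 *m invmx A22 *m C2^T *m invmx W) in
  let T := block_mx (1%:M - D *m E) (- (D *m G)) (- (F *m E)) (1%:M - F *m G) in
  let M := Acal *m invmx Ptil in
  [/\ M = block_mx 1%:M 0 (col_mx (A21 *m invmx A11) (C *m invmx A11)) T,
      (n + m <= mup 1 (char_poly M))%N
    & char_poly M = ('X - 1%:P) ^+ n * char_poly T].
Proof.
move=> sA sA2 kerA2 _ nz_C2_1 sW g1_gt0 g2_gt0 A11 A12 A21 A22 Shat Acal Ptil F D E G T M.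
have sWi := spd_invmx sW.
have uA11 : A11 \in unitmx by apply/spd_unitmx/spdD_congr; rewrite ?ltW.
have uA22 : A22 \in unitmx.
  exact: unitmx_psdD_congr sA2 sWi g2_gt0 (ker_line_meet0 kerA2 nz_C2_1).
have MT : M = block_mx 1%:M 0 (col_mx (A21 *m invmx A11) (C *m invmx A11)) T.
  rewrite /M /Acal /Ptil /block3 col_mx0.
  exact: augmented_mul_invmx_precond (spd_unitmx sA) (spd_unitmx sW)
    (lt0r_neq0 g1_gt0) uA11 uA22.
have charM : char_poly M = ('X - 1%:P) ^+ n * char_poly T.
  by rewrite MT char_poly_block_lower char_poly1.
have charT :
    char_poly T = ('X - 1%:P) ^+ m * char_poly (1%:M - row_mx E G *m col_mx D F).
  have -> : T = 1%:M - col_mx D F *m row_mx E G.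
    by rewrite mul_col_row (scalar_mx_block m l 1) opp_block_mx add_block_mx !add0r.
  apply: (@mulfI _ (('X - 1%:P) ^+ l)); first by rewrite expf_neq0 ?polyXsubC_eq0.
  by rewrite char_poly_1_sub_mulmxC mulrA -exprD (addnC l m).
split=> //.
by rewrite mup_geq ?monic_neq0 ?char_poly_monic // charM charT mulrA -exprD dvdp_mulIl.
Qed.
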